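(* For every infinite group $G$, $FT_G\subsetneq Sp_G$; consequently $\overline{G^*G^*}\subsetneq FT_G^{\wedge}$.
   Context: A subset $A$ of $G$ is $n$-thin ($n\in\mathbb{N}$) if for all distinct $g_0,\dots,g_n\in G$ the set $g_0A\cap\dots\cap g_nA$ is finite; finitely thin if it is $n$-thin for some $n$. $FT_G$ is the family of finitely thin subsets. $A$ is sparse if for every infinite $X\subseteq G$ there is finite $F\subseteq X$ with $\bigcap_{g\in F}gA$ finite; $Sp_G$ is the family of sparse subsets. $\beta G$ is the semigroup of ultrafilters on $G$ (with the standard extension of multiplication), $G^*$ the free ultrafilters, $\overline{G^*G^*}$ the closure of $\{pq:p,q\in G^*\}$. For an ideal $\mathcal{I}$ of subsets of $G$, $\mathcal{I}^{\wedge}=\{p\in\beta G: G\setminus A\in p$ for each $A\in\mathcal{I}\}$. *)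

From Stdlib Require Import List.
Import ListNotations.
Set Implicit Arguments.

Record Group := {
  carrier :> Type;
  gmul : carrier -> carrier -> carrier;
  gone : carrier;
  ginv : carrier -> carrier;
  gmul_assoc : forall x y z, gmul x (gmul y z) = gmul (gmul x y) z;
  gmul_1l : forall x, gmul gone x = x;
  gmul_1r : forall x, gmul x gone = x;
  gmul_Vl : forall x, gmul (ginv x) x = gone;
  gmul_Vr : forall x, gmul x (ginv x) = gone
}.

Section Defs.
Variable G : Group.

Definition finite_set (A : G -> Prop) : Prop :=
  exists l : list G, forall x, A x -> In x l.

Definition infinite_group : Prop := ~ finite_set (fun _ => True).

Definition translate (g : G) (A : G -> Prop) : G -> Prop :=
  fun x => A (gmul G (ginv G g) x).

Definition inter_translates (F : list G) (A : G -> Prop) : G -> Prop :=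
  fun x => forall g, In g F -> translate g A x.

Definition n_thin (n : nat) (A : G -> Prop) : Prop :=
  forall F : list G, NoDup F -> length F = S n ->
    finite_set (inter_translates F A).

Definition finitely_thin (A : G -> Prop) : Prop := exists n, n_thin n A.

Definition sparse (A : G -> Prop) : Prop :=
  forall X : G -> Prop, ~ finite_set X ->
    exists F : list G, (forall g, In g F -> X g) /\
      finite_set (inter_translates F A).

Definition ultrafilter (p : (G -> Prop) -> Prop) : Prop :=
  p (fun _ => True) /\
  ~ p (fun _ => False) /\
  (forall A B, p A -> p B -> p (fun x => A x /\ B x)) /\
  (forall A B, p A -> (forall x, A x -> B x) -> p B) /\
  (forall A, p A \/ p (fun x => ~ A x)).

Definition free_uf (p : (G -> Prop) -> Prop) : Prop :=
  ultrafilter p /\ forall A, finite_set A -> ~ p A.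

Definition uf_mul (p q : (G -> Prop) -> Prop) : (G -> Prop) -> Prop :=
  fun A => p (fun x => q (fun y => A (gmul G x y))).

(* closure of G*G* in βG (basic open sets {p : A ∈ p}) *)
Definition in_closure_GstarGstar (p : (G -> Prop) -> Prop) : Prop :=
  ultrafilter p /\
  forall A, p A -> exists q r, free_uf q /\ free_uf r /\ uf_mul q r A.

Definition FT_wedge (p : (G -> Prop) -> Prop) : Prop :=
  ultrafilter p /\ forall A, finitely_thin A -> p (fun x => ~ A x).

End Defs.

From Stdlib Require Import List Arith Lia Classical ClassicalEpsilon FinFun Permutation.
From mathcomp Require filter.
Import ListNotations.

(* If [p] lies in the closure of [G*G*] and [B] is in [p], then [B] is in [q r]
   for free [q], [r]; the [g] with [g B] in [r] form an infinite set whose finite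
   intersections of translates of [B] lie in [r], hence are infinite: [B] is not
   sparse.  So the closure avoids every sparse set, in particular every finitely
   thin one, while an ultrafilter containing a sparse set [A] that is not
   finitely thin and the complements of all finitely thin sets (an ideal not
   containing [A]) lies in [FT_G^∧] but not in the closure.

   For such an [A], take a sequence [a] in which no term is a product of at most
   7 earlier terms and their inverses, put [c p = a (2p)], [x j = a (4j + 1)],
   blocks [T k = {c k, ..., c (2k)}] and [A = U_j T (kappa j) x j], where
   [kappa] takes every value infinitely often.  Then [A] contains [T n x j] for
   infinitely many [j], so it is not n-thin.  For sparseness, let [z] lie in the
   translates [v A] for [v] in a finite subset of an infinite set [X].  The
   points [v^-1 z] lie either in blocks of different indices, which genericity
   of [a] allows only for bounded indices, or all in one block [T k]; then two
   of them, from [g <> g'], give [g'^-1 g = c p (c q)^-1] with [k <= max p q],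
   and genericity bounds [max p q], hence the number of such [v]. *)

Section Group.

Variable G : Group.
Local Notation "x ⋅ y" := (gmul G x y) (at level 40, left associativity).
Local Notation inv := (ginv G).
Local Notation one := (gone G).
Local Notation fin := (finite_set G).

Lemma mulgA (x y z : G) : x ⋅ (y ⋅ z) = x ⋅ y ⋅ z.
Proof. apply gmul_assoc. Qed.

Lemma mulKg (x y : G) : inv x ⋅ (x ⋅ y) = y.
Proof. rewrite mulgA, gmul_Vl, gmul_1l. reflexivity. Qed.

Lemma mulKVg (x y : G) : x ⋅ (inv x ⋅ y) = y.
Proof. rewrite mulgA, gmul_Vr, gmul_1l. reflexivity. Qed.

Lemma mulgK (x y : G) : y ⋅ x ⋅ inv x = y.
Proof. rewrite <- mulgA, gmul_Vr, gmul_1r. reflexivity. Qed.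

Lemma mulgKV (x y : G) : y ⋅ inv x ⋅ x = y.
Proof. rewrite <- mulgA, gmul_Vl, gmul_1r. reflexivity. Qed.

Lemma invg_unique (x y : G) : x ⋅ y = one -> y = inv x.
Proof. intro H. rewrite <- (mulKg x y), H, gmul_1r. reflexivity. Qed.

Lemma invgK (x : G) : inv (inv x) = x.
Proof. symmetry. apply invg_unique, gmul_Vl. Qed.

Lemma invMg (x y : G) : inv (x ⋅ y) = inv y ⋅ inv x.
Proof. symmetry. apply invg_unique. rewrite <- mulgA, mulKVg. apply gmul_Vr. Qed.

Lemma invg_inj : Injective inv.
Proof. intros x y H. rewrite <- (invgK x), H, invgK. reflexivity. Qed.

Lemma mulIg (y u v : G) : u ⋅ y = v ⋅ y -> u = v.
Proof. intro H. rewrite <- (mulgK y u), H, mulgK. reflexivity. Qed.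

Lemma quotient_common_right (u v y : G) : u ⋅ y ⋅ inv (v ⋅ y) = u ⋅ inv v.
Proof. rewrite invMg, <- mulgA, mulKVg. reflexivity. Qed.

Lemma quotient_common_right_inv (v w z : G) : inv v ⋅ z ⋅ inv (inv w ⋅ z) = inv v ⋅ w.
Proof. rewrite quotient_common_right, invgK. reflexivity. Qed.

(** * Finite and infinite sets *)

Lemma fin_subset (A B : G -> Prop) : fin B -> (forall x, A x -> B x) -> fin A.
Proof. intros [l Hl] H. exists l. auto. Qed.

Lemma fin_union (A B : G -> Prop) : fin A -> fin B -> fin (fun z => A z \/ B z).
Proof.
  intros [l1 H1] [l2 H2]. exists (l1 ++ l2).
  intros x [Hx|Hx]; apply in_or_app; auto.
Qed.

Lemma fin_inv_preimage (X : G -> Prop) : fin X -> fin (fun x => X (inv x)).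
Proof.
  intros [l Hl]. exists (map inv l). intros x Hx.
  rewrite <- (invgK x). apply in_map, Hl, Hx.
Qed.

Lemma infinite_nodup_list (X : G -> Prop) : ~ fin X ->
  forall n, exists l, NoDup l /\ length l = n /\ forall x, In x l -> X x.
Proof.
  intros HX n. induction n as [|n (l & Hnd & Hlen & Hl)].
  - exists []. repeat split; [constructor | intros x []].
  - assert (Hnew : exists x, X x /\ ~ In x l).
    { apply NNPP. intro Hno. apply HX. exists l. intros x Hx.
      apply NNPP. intro Hnin. apply Hno. eauto. }
    destruct Hnew as (x & Hx & Hxl). exists (x :: l). repeat split.
    + constructor; assumption.
    + simpl. lia.
    + intros y [<-|Hy]; auto.
Qed.

Lemma infinite_of_injective (X : G -> Prop) (f : nat -> G) :
  Injective f -> (forall t, X (f t)) -> ~ fin X.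
Proof.
  intros Hf HX [l Hl].
  assert (Hle : length (map f (seq 0 (S (length l)))) <= length l).
  { apply NoDup_incl_length.
    - apply Injective_map_NoDup; [exact Hf | apply seq_NoDup].
    - intros y Hy. apply in_map_iff in Hy. destruct Hy as (t & <- & _). apply Hl, HX. }
  rewrite length_map, length_seq in Hle. lia.
Qed.

Lemma infinite_group_avoids (HG : infinite_group G) (B : G -> Prop) : fin B -> exists y, ~ B y.
Proof.
  intro HB. apply NNPP. intro Hall. apply HG.
  apply (fin_subset _ _ HB). intros y _. apply NNPP. intro Hy. apply Hall. eauto.
Qed.

Lemma avoiding_sequence (HG : infinite_group G) (bad : list G -> G -> Prop) :
  (forall l, fin (bad l)) -> exists a : nat -> G, forall m, ~ bad (map a (seq 0 m)) (a m).
Proof.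
  intro Hbad.
  pose (choose l := proj1_sig (constructive_indefinite_description _
                                 (infinite_group_avoids HG _ (Hbad l)))).
  assert (Hchoose : forall l, ~ bad l (choose l)).
  { intro l. unfold choose. destruct (constructive_indefinite_description _ _). assumption. }
  pose (prefix := fix prefix n :=
          match n with 0 => [] | S n => prefix n ++ [choose (prefix n)] end).
  exists (fun m => choose (prefix m)).
  assert (Hprefix : forall m, prefix m = map (fun m => choose (prefix m)) (seq 0 m)).
  { induction m as [|m IH]; [reflexivity|].
    rewrite seq_S, map_app, <- IH. reflexivity. }
  intro m. rewrite <- Hprefix. apply Hchoose.
Qed.

(** * Thin sets *)

Lemma n_thin_long n (B : G -> Prop) F :
  n_thin G n B -> NoDup F -> n < length F -> fin (inter_translates G F B).
Proof.
  intros Hn HF Hlen. rewrite <- (firstn_skipn (S n) F) in HF.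
  apply (fin_subset _ (inter_translates G (firstn (S n) F) B)).
  - apply Hn; [exact (NoDup_app_remove_r _ _ HF) | apply firstn_length_le; lia].
  - intros z Hz g Hg. apply Hz. rewrite <- (firstn_skipn (S n) F). apply in_or_app. auto.
Qed.

Lemma n_thin_sub n (A B : G -> Prop) :
  n_thin G n B -> (forall x, A x -> B x) -> n_thin G n A.
Proof.
  intros Hn HAB F HF Hlen. apply (fin_subset _ _ (Hn F HF Hlen)).
  intros z Hz g Hg. apply HAB, Hz, Hg.
Qed.

Lemma finitely_thin_empty : finitely_thin G (fun _ => False).
Proof.
  exists 0. intros [|g F] _ Hlen; [discriminate|].
  exists []. intros z Hz. exact (Hz g (or_introl eq_refl)).
Qed.

(* Each translate in [R] is moved to [F1] or [F2] according to the point [z];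
   once [R] is empty, [F1] or [F2] is long enough for the thinness of its set. *)
Lemma inter_translates_union_finite n m (B1 B2 : G -> Prop) :
  n_thin G n B1 -> n_thin G m B2 -> forall R F1 F2,
  NoDup (F1 ++ F2 ++ R) -> n + m + 2 <= length (F1 ++ F2 ++ R) ->
  fin (fun z => inter_translates G F1 B1 z /\ inter_translates G F2 B2 z /\
                inter_translates G R (fun y => B1 y \/ B2 y) z).
Proof.
  intros H1 H2 R. induction R as [|g R IH]; intros F1 F2 Hnd Hlen.
  - rewrite !length_app in Hlen. simpl in Hlen.
    destruct (Nat.lt_ge_cases n (length F1)) as [Hn|Hm].
    + apply (fin_subset _ _ (n_thin_long n B1 F1 H1 (NoDup_app_remove_r _ _ Hnd) Hn)).
      intros z [Hz _]. exact Hz.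
    + assert (HF2 : NoDup F2)
        by (rewrite app_nil_r in Hnd; exact (NoDup_app_remove_l _ _ Hnd)).
      apply (fin_subset _ _ (n_thin_long m B2 F2 H2 HF2 ltac:(lia))).
      intros z (_ & Hz & _). exact Hz.
  - assert (Hnd1 : NoDup ((g :: F1) ++ F2 ++ R)).
    { apply (Permutation_NoDup (l := F1 ++ F2 ++ g :: R)); [|exact Hnd].
      rewrite !app_assoc. symmetry. apply Permutation_middle. }
    assert (Hnd2 : NoDup (F1 ++ (g :: F2) ++ R)).
    { apply (Permutation_NoDup (l := F1 ++ F2 ++ g :: R)); [|exact Hnd].
      apply Permutation_app_head. symmetry. apply Permutation_middle. }
    rewrite !length_app in Hlen. simpl in Hlen.
    apply (fin_subset _ _ (fin_union _ _
      (IH (g :: F1) F2 Hnd1 ltac:(rewrite !length_app; simpl; lia))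
      (IH F1 (g :: F2) Hnd2 ltac:(rewrite !length_app; simpl; lia)))).
    intros z (Hz1 & Hz2 & HzR).
    destruct (HzR g (or_introl eq_refl)) as [Hg|Hg]; [left|right];
      repeat split; try (intros h [<-|Hh]); auto; intros h Hh; apply HzR; right; exact Hh.
Qed.

Lemma finitely_thin_union (B1 B2 : G -> Prop) :
  finitely_thin G B1 -> finitely_thin G B2 -> finitely_thin G (fun y => B1 y \/ B2 y).
Proof.
  intros [n Hn] [m Hm]. exists (S (n + m)). intros F HF Hlen.
  apply (fin_subset _ _ (inter_translates_union_finite n m B1 B2 Hn Hm F [] [] HF
                        ltac:(simpl; lia))).
  intros z Hz. repeat split; [intros g []|intros g []|exact Hz].
Qed.

Lemma finitely_thin_sparse (A : G -> Prop) : finitely_thin G A -> sparse G A.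
Proof.
  intros [n Hn] X HX. destruct (infinite_nodup_list X HX (S n)) as (F & Hnd & Hlen & HFX).
  exists F. split; [exact HFX | exact (Hn F Hnd Hlen)].
Qed.

(** * Ultrafilters *)

Lemma ultrafilter_extends (F : (G -> Prop) -> Prop) :
  F (fun _ => True) -> ~ F (fun _ => False) ->
  (forall A B, F A -> F B -> F (fun x => A x /\ B x)) ->
  (forall A B, F A -> (forall x, A x -> B x) -> F B) ->
  exists p, ultrafilter G p /\ forall A, F A -> p A.
Proof.
  intros FT F0 FI FS.
  assert (PF : filter.ProperFilter F).
  { apply filter.Build_ProperFilter; [exact F0|].
    constructor; [exact FT | exact FI | intros A B HAB HA; exact (FS A B HA HAB)]. }
  destruct (filter.ultraFilterLemma PF) as (p & Up & HFp).
  exists p. split; [|exact HFp].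
  repeat split.
  - exact (@filter.filterT _ p _).
  - exact (@filter.filter_not_empty _ p _).
  - intros A B; exact (@filter.filterI _ p _ A B).
  - intros A B HA HAB; exact (@filter.filterS _ p _ A B HAB HA).
  - intro A; exact (filter.in_ultra_setVsetC A Up).
Qed.

Lemma ultrafilter_inter_list (r : (G -> Prop) -> Prop) (P : G -> G -> Prop) F :
  ultrafilter G r -> (forall g, In g F -> r (P g)) -> r (fun z => forall g, In g F -> P g z).
Proof.
  intros (HT & _ & HI & HS & _). induction F as [|g F IH]; intro HF.
  - apply (HS _ _ HT). intros z _ h [].
  - apply (HS (fun z => P g z /\ forall h, In h F -> P h z)).
    + apply HI; [apply HF; left; reflexivity|].
      apply IH. intros h Hh. apply HF. right. exact Hh.
    + intros z [Hg HF'] h [<-|Hh]; auto.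
Qed.

Lemma closure_GstarGstar_not_sparse p (B : G -> Prop) :
  in_closure_GstarGstar G p -> p B -> ~ sparse G B.
Proof.
  intros [_ Hcl] HB Hsparse.
  destruct (Hcl B HB) as (q & r & [_ Hqfree] & [Hr Hrfree] & HqrB).
  set (X := fun g => r (translate G g B)).
  assert (HX : ~ fin X).
  { intro HXfin. apply (Hqfree (fun x => r (fun y => B (x ⋅ y)))); [|exact HqrB].
    apply (fin_subset _ _ (fin_inv_preimage X HXfin)).
    intros x Hx. unfold X, translate. rewrite invgK. exact Hx. }
  destruct (Hsparse X HX) as (F & HFX & HFfin).
  exact (Hrfree _ HFfin (ultrafilter_inter_list r _ F Hr HFX)).
Qed.

Lemma closure_GstarGstar_FT_wedge p : in_closure_GstarGstar G p -> FT_wedge G p.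
Proof.
  intro Hcl. pose proof (proj1 Hcl) as Hp. split; [exact Hp|].
  intros A HA. destruct (proj2 (proj2 (proj2 (proj2 Hp))) A) as [HpA|HpA]; [|exact HpA].
  exfalso. exact (closure_GstarGstar_not_sparse p A Hcl HpA (finitely_thin_sparse A HA)).
Qed.

Lemma FT_wedge_containing (A : G -> Prop) :
  ~ finitely_thin G A -> exists p, FT_wedge G p /\ p A.
Proof.
  intro HA.
  destruct (ultrafilter_extends
    (fun C => exists B, finitely_thin G B /\ forall z, A z -> ~ B z -> C z))
    as (p & Hp & Hsub).
  - exists (fun _ => False). split; [exact finitely_thin_empty | auto].
  - intros (B & [n HB] & HAB). apply HA. exists n.
    apply (n_thin_sub n A B HB). intros z Hz. apply NNPP. intro HBz. exact (HAB z Hz HBz).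
  - intros C1 C2 (B1 & HB1 & H1) (B2 & HB2 & H2).
    exists (fun y => B1 y \/ B2 y). split; [exact (finitely_thin_union B1 B2 HB1 HB2)|].
    intros z Hz HBz. split; [apply H1 | apply H2]; auto.
  - intros C1 C2 (B & HB & H) HC. exists B. split; [exact HB|]. auto.
  - exists p. split; [split; [exact Hp|] | apply Hsub].
    + intros B HB. apply Hsub. exists B. auto.
    + exists (fun _ => False). split; [exact finitely_thin_empty | auto].
Qed.

(** * A sparse set which is not finitely thin *)

Definition bounded (N : nat -> Prop) : Prop := exists M, forall n, N n -> n <= M.

Lemma bounded_of_le_all (N : nat -> Prop) :
  (forall n n', N n -> N n' -> n <= n') -> bounded N.
Proof.
  intro Hle. destruct (classic (exists n', N n')) as [[n' Hn']|Hempty].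
  - exists n'. intros n Hn. exact (Hle n n' Hn Hn').
  - exists 0. intros n Hn. exfalso. eauto.
Qed.

Lemma bounded_list_union {T} (V : list T) (N : T -> nat -> Prop) :
  (forall v, In v V -> bounded (N v)) -> bounded (fun n => exists v, In v V /\ N v n).
Proof.
  induction V as [|v V IH]; intro HV.
  - exists 0. intros n (w & [] & _).
  - destruct (HV v (or_introl eq_refl)) as [Mv HMv].
    destruct IH as [M HM]; [intros w Hw; apply HV; right; exact Hw|].
    exists (max Mv M). intros n (w & [<-|Hw] & Hn).
    + specialize (HMv n Hn). lia.
    + assert (n <= M) by (apply HM; eauto). lia.
Qed.

Definition kappa (m : nat) : nat := m - Nat.sqrt m * Nat.sqrt m.

Lemma kappa_le m : kappa m <= m.
Proof. unfold kappa. lia. Qed.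

Lemma kappa_fiber k t : kappa ((t + k) * (t + k) + k) = k.
Proof. unfold kappa. rewrite (Nat.sqrt_unique _ (t + k)); nia. Qed.

Inductive word (l : list G) : nat -> G -> Prop :=
  | word_one k : word l k one
  | word_cons k u w : In u l \/ In (inv u) l -> word l k w -> word l (S k) (u ⋅ w).

Lemma word_weaken l k n w : word l k w -> k <= n -> word l n w.
Proof.
  intro Hw. revert n. induction Hw as [k|k u w Hu Hw IH]; intros n Hn.
  - apply word_one.
  - destruct n as [|n]; [lia|]. apply word_cons; [exact Hu | apply IH; lia].
Qed.

Lemma word_letter l u : In u l -> word l 1 u.
Proof.
  intro Hu. rewrite <- (gmul_1r G u). apply word_cons; [left; exact Hu | apply word_one].
Qed.

Lemma word_mul l k k' u v : word l k u -> word l k' v -> word l (k + k') (u ⋅ v).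
Proof.
  intros Hu Hv. induction Hu as [k|k u w Hu Hw IH].
  - rewrite gmul_1l. apply (word_weaken _ _ _ _ Hv). lia.
  - rewrite <- mulgA. apply word_cons; assumption.
Qed.

Lemma word_inv l k u : word l k u -> word l k (inv u).
Proof.
  induction 1 as [k|k u w Hu Hw IH].
  - rewrite <- (gmul_1l G (inv one)), gmul_Vr. apply word_one.
  - rewrite invMg, <- Nat.add_1_r. apply (word_mul _ _ _ _ _ IH).
    rewrite <- (gmul_1r G (inv u)). apply word_cons; [|apply word_one].
    rewrite invgK. tauto.
Qed.

Lemma word_finite l k : fin (word l k).
Proof.
  induction k as [|k [lw Hlw]].
  - exists [one]. intros w Hw. inversion Hw. left. reflexivity.
  - exists (one :: flat_map (fun w => map (fun u => u ⋅ w) (l ++ map inv l)) lw).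
    intros z Hz. inversion Hz as [|k' u w Hu Hw]; subst; [left; reflexivity|right].
    apply in_flat_map. exists w. split; [exact (Hlw w Hw)|].
    apply (in_map (fun v => v ⋅ w)), in_or_app.
    destruct Hu as [Hu|Hu]; [left; exact Hu|right].
    rewrite <- (invgK u). apply in_map. exact Hu.
Qed.

Ltac build_word :=
  lazymatch goal with
  | |- word _ _ (gmul _ _ _) => eapply word_mul; [build_word | build_word]
  | |- word _ _ (ginv _ _) => apply word_inv; build_word
  | |- word _ _ _ => apply word_letter
  end.

Section Construction.

Variable a : nat -> G.

(* So no relation of length at most 8 between terms of [a], in which the latest
   term occurs exactly once, can hold. *)
Hypothesis a_generic : forall m, ~ word (map a (seq 0 m)) 7 (a m).

Lemma in_prefix p m : p < m -> In (a p) (map a (seq 0 m)).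
Proof. intro Hp. apply in_map, in_seq. lia. Qed.

Lemma generic_not_word m w : a m = w -> word (map a (seq 0 m)) 7 w -> False.
Proof. intros <- Hw. exact (a_generic m Hw). Qed.

Lemma generic_injective : Injective a.
Proof.
  intros i j Hij.
  destruct (Nat.lt_total i j) as [Hlt|[Heq|Hlt]]; [exfalso | exact Heq | exfalso].
  - apply (generic_not_word j (a i)); [symmetry; exact Hij|].
    apply (word_weaken _ 1); [apply word_letter, in_prefix, Hlt | lia].
  - apply (generic_not_word i (a j)); [exact Hij|].
    apply (word_weaken _ 1); [apply word_letter, in_prefix, Hlt | lia].
Qed.

Lemma generic_quotient_max P Q P' Q' :
  P <> Q -> a P ⋅ inv (a Q) = a P' ⋅ inv (a Q') -> max P Q <= max P' Q'.
Proof.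
  intros HPQ E.
  destruct (Nat.le_gt_cases (max P Q) (max P' Q')) as [|Hlt]; [assumption|exfalso].
  destruct (Nat.lt_total P Q) as [HPQ'|[HPQ'|HPQ']]; [|contradiction|].
  - apply (generic_not_word Q (inv (a P' ⋅ inv (a Q')) ⋅ a P)).
    + rewrite <- E, invMg, invgK, <- mulgA, gmul_Vl, gmul_1r. reflexivity.
    + eapply word_weaken; [build_word|]; [apply in_prefix; lia ..| simpl; lia].
  - apply (generic_not_word P (a P' ⋅ inv (a Q') ⋅ a Q)).
    + rewrite <- E, mulgKV. reflexivity.
    + eapply word_weaken; [build_word|]; [apply in_prefix; lia ..| simpl; lia].
Qed.

(* The terms [c p] of [block (kappa j)] have index at most [4 * j] in [a], below
   that of [x j]: this makes [x] the latest term in [block_quotient_max]. *)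
Definition c (p : nat) : G := a (2 * p).
Definition x (j : nat) : G := a (4 * j + 1).
Definition block (k : nat) : list G := map c (seq k (S k)).
Definition block_union (z : G) : Prop := exists j s, In s (block (kappa j)) /\ z = s ⋅ x j.

Lemma in_block k s : In s (block k) -> exists p, k <= p <= 2 * k /\ s = c p.
Proof.
  intro Hs. apply in_map_iff in Hs. destruct Hs as (p & <- & Hp).
  apply in_seq in Hp. exists p. split; [lia | reflexivity].
Qed.

Lemma block_NoDup k : NoDup (block k).
Proof.
  apply Injective_map_NoDup; [|apply seq_NoDup].
  intros p q Hpq. apply generic_injective in Hpq. lia.
Qed.

Lemma x_injective : Injective x.
Proof. intros i j Hij. apply generic_injective in Hij. lia. Qed.

Lemma block_quotient_max i i' j j' s s' t t' :
  i <> i' -> In s (block (kappa j)) -> In s' (block (kappa j')) ->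
  In t (block (kappa i)) -> In t' (block (kappa i')) ->
  s' ⋅ x j' ⋅ inv (s ⋅ x j) = t' ⋅ x i' ⋅ inv (t ⋅ x i) -> max i i' <= max j j'.
Proof.
  intros Hii Hs Hs' Ht Ht' E.
  destruct (Nat.le_gt_cases (max i i') (max j j')) as [|Hlt]; [assumption|exfalso].
  pose proof (kappa_le i). pose proof (kappa_le i').
  pose proof (kappa_le j). pose proof (kappa_le j').
  destruct (in_block _ _ Hs) as (ps & Hps & ->), (in_block _ _ Hs') as (ps' & Hps' & ->),
    (in_block _ _ Ht) as (pt & Hpt & ->), (in_block _ _ Ht') as (pt' & Hpt' & ->).
  destruct (Nat.lt_total i i') as [Hi|[Hi|Hi]]; [|contradiction|].
  - apply (generic_not_word (4 * i' + 1)
             (inv (c pt') ⋅ (c ps' ⋅ x j' ⋅ inv (c ps ⋅ x j) ⋅ (c pt ⋅ x i)))).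
    + rewrite E, mulgKV, mulKg. reflexivity.
    + eapply word_weaken; [build_word|]; [apply in_prefix; lia ..| simpl; lia].
  - apply (generic_not_word (4 * i + 1)
             (inv (c pt) ⋅ (inv (c ps' ⋅ x j' ⋅ inv (c ps ⋅ x j)) ⋅ (c pt' ⋅ x i')))).
    + rewrite E, invMg, invgK, mulgKV, mulKg. reflexivity.
    + eapply word_weaken; [build_word|]; [apply in_prefix; lia ..| simpl; lia].
Qed.

Lemma block_union_not_finitely_thin : ~ finitely_thin G block_union.
Proof.
  intros [n Hn].
  assert (Hfin : fin (inter_translates G (map inv (block n)) block_union)).
  { apply Hn.
    - apply Injective_map_NoDup; [exact invg_inj | apply block_NoDup].
    - unfold block. rewrite !length_map, length_seq. reflexivity. }
  revert Hfin. apply (infinite_of_injective _ (fun t => x ((t + n) * (t + n) + n))).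
  - intros t t' Ht. apply x_injective in Ht. nia.
  - intros t g Hg. apply in_map_iff in Hg. destruct Hg as (s & <- & Hs).
    unfold translate. rewrite invgK. exists ((t + n) * (t + n) + n), s.
    rewrite kappa_fiber. split; [exact Hs | reflexivity].
Qed.

Lemma quotient_bounded d :
  bounded (fun n => exists p q, p <> q /\ c p ⋅ inv (c q) = d /\ n = max p q).
Proof.
  apply bounded_of_le_all. intros n n' (p & q & Hpq & Hd & ->) (p' & q' & _ & Hd' & ->).
  assert (Hmax : max (2 * p) (2 * q) <= max (2 * p') (2 * q')).
  { apply generic_quotient_max; [lia|]. fold (c p) (c q) (c p') (c q'). congruence. }
  lia.
Qed.

Lemma cross_block_bounded e :
  bounded (fun n => exists j j' s s', j <> j' /\ In s (block (kappa j)) /\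
             In s' (block (kappa j')) /\ s' ⋅ x j' ⋅ inv (s ⋅ x j) = e /\ n = max j j').
Proof.
  apply bounded_of_le_all.
  intros n n' (i & i' & t & t' & Hii & Ht & Ht' & He & ->)
         (j & j' & s & s' & _ & Hs & Hs' & He' & ->).
  apply (block_quotient_max i i' j j' s s' t t'); [assumption ..|]. congruence.
Qed.

Lemma same_block_length z j (V : list G) : NoDup V ->
  (forall v, In v V -> exists s, In s (block (kappa j)) /\ inv v ⋅ z = s ⋅ x j) ->
  length V <= S (kappa j).
Proof.
  intros HV Hrep.
  assert (Hle :
    length (map (fun v => inv v ⋅ z ⋅ inv (x j)) V) <= length (block (kappa j))).
  { apply NoDup_incl_length.
    - apply Injective_map_NoDup; [|exact HV].
      intros v w Hvw. apply invg_inj, (mulIg z), (mulIg (inv (x j))), Hvw.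
    - intros y Hy. apply in_map_iff in Hy. destruct Hy as (v & <- & Hv).
      destruct (Hrep v Hv) as (s & Hs & ->). rewrite mulgK. exact Hs. }
  unfold block in Hle. rewrite !length_map, length_seq in Hle. exact Hle.
Qed.

Lemma same_block_quotient z j ga gb s sb : ga <> gb ->
  In s (block (kappa j)) -> In sb (block (kappa j)) ->
  inv ga ⋅ z = s ⋅ x j -> inv gb ⋅ z = sb ⋅ x j ->
  exists p q, p <> q /\ c p ⋅ inv (c q) = inv gb ⋅ ga /\ kappa j <= max p q.
Proof.
  intros Hab Hs Hsb Ha Hb.
  destruct (in_block _ _ Hs) as (q & Hq & ->). destruct (in_block _ _ Hsb) as (p & Hp & ->).
  assert (E : c p ⋅ inv (c q) = inv gb ⋅ ga).
  { rewrite <- (quotient_common_right (c p) (c q) (x j)), <- Ha, <- Hb.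
    apply quotient_common_right_inv. }
  exists p, q. repeat split; [|exact E|lia].
  intros <-. apply Hab. rewrite gmul_Vr in E.
  rewrite <- (mulKVg gb ga), <- E, gmul_1r. reflexivity.
Qed.

Lemma translated_blocks_finite g M :
  fin (fun z => exists j s, j <= M /\ In s (block (kappa j)) /\ z = g ⋅ (s ⋅ x j)).
Proof.
  exists (flat_map (fun j => map (fun s => g ⋅ (s ⋅ x j)) (block (kappa j)))
                   (seq 0 (S M))).
  intros z (j & s & Hj & Hs & ->). apply in_flat_map. exists j. split.
  - apply in_seq. lia.
  - apply (in_map (fun s => g ⋅ (s ⋅ x j))), Hs.
Qed.

Lemma block_union_sparse : sparse G block_union.
Proof.
  intros X HX.
  destruct (infinite_nodup_list X HX 2) as ([|ga [|gb []]] & Hnd & Hlen & HabX);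
    try discriminate.
  assert (Hab : ga <> gb) by (intros <-; inversion Hnd; simpl in *; tauto).
  destruct (quotient_bounded (inv gb ⋅ ga)) as [K HK].
  destruct (infinite_nodup_list X HX (K + 2)) as (L & HndL & HlenL & HLX).
  set (F := ga :: gb :: L).
  destruct (bounded_list_union F (fun v n => exists j j' s s', j <> j' /\
             In s (block (kappa j)) /\ In s' (block (kappa j')) /\
             s' ⋅ x j' ⋅ inv (s ⋅ x j) = inv v ⋅ ga /\ n = max j j')) as [M HM].
  { intros v _. apply cross_block_bounded. }
  exists F. split; [intros g [<-|[<-|Hg]]; [apply HabX; simpl; auto .. | auto]|].
  apply (fin_subset _ _ (translated_blocks_finite ga M)). intros z Hz.
  destruct (Hz ga (or_introl eq_refl)) as (j & s & Hs & Hzs).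
  exists j, s. split; [|split; [exact Hs | rewrite <- Hzs, mulKVg; reflexivity]].
  destruct (classic (exists v j' s', In v F /\ j' <> j /\ In s' (block (kappa j')) /\
                                     inv v ⋅ z = s' ⋅ x j'))
    as [(v & j' & s' & Hv & Hj' & Hs' & Hzv)|Hsame].
  - assert (max j j' <= M); [|lia].
    apply HM. exists v. split; [exact Hv|]. exists j, j', s, s'.
    repeat split; auto. rewrite <- Hzv, <- Hzs. apply quotient_common_right_inv.
  - exfalso.
    assert (Hrep : forall v, In v F ->
              exists s', In s' (block (kappa j)) /\ inv v ⋅ z = s' ⋅ x j).
    { intros v Hv. destruct (Hz v Hv) as (j' & s' & Hs' & Hzv).
      destruct (Nat.eq_dec j' j) as [<-|Hj']; [eauto|].
      exfalso. apply Hsame. exists v, j', s'. auto. }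
    destruct (Hrep gb) as (sb & Hsb & Hzb); [right; left; reflexivity|].
    destruct (same_block_quotient z j ga gb s sb Hab Hs Hsb Hzs Hzb)
      as (p & q & Hpq & E & Hkp).
    assert (max p q <= K) by (apply HK; exists p, q; auto).
    assert (length L <= S (kappa j)).
    { apply (same_block_length z j L HndL). intros v Hv. apply Hrep. right. right. exact Hv. }
    lia.
Qed.

End Construction.

Lemma exists_sparse_not_finitely_thin (HG : infinite_group G) :
  exists B : G -> Prop, sparse G B /\ ~ finitely_thin G B.
Proof.
  destruct (avoiding_sequence HG (fun l => word l 7) (fun l => word_finite l 7)) as [a Ha].
  exists (block_union a).
  split; [apply block_union_sparse | apply block_union_not_finitely_thin]; exact Ha.
Qed.

End Group.

Theorem theorem6p6 (G : Group) (HG : infinite_group G) :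
  ((forall A : G -> Prop, finitely_thin G A -> sparse G A) /\
   (exists A : G -> Prop, sparse G A /\ ~ finitely_thin G A)) /\
  ((forall p : (G -> Prop) -> Prop, in_closure_GstarGstar G p -> FT_wedge G p) /\
   (exists p : (G -> Prop) -> Prop, FT_wedge G p /\ ~ in_closure_GstarGstar G p)).
Proof.
  destruct (exists_sparse_not_finitely_thin G HG) as (A & HA_sparse & HA_not_thin).
  destruct (FT_wedge_containing G A HA_not_thin) as (p & Hp & HpA).
  split; split.
  - exact (finitely_thin_sparse G).
  - exists A. split; assumption.
  - exact (closure_GstarGstar_FT_wedge G).
  - exists p. split; [exact Hp|].
    intro Hcl. exact (closure_GstarGstar_not_sparse G p A Hcl HpA HA_sparse).
Qed.
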